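(* Fix $\alpha\in(0,1)$. Let $u\in C([-1,1])$ be monotone. Then for every $\varepsilon>0$ there exists an $\alpha$-power piecewise linear function $g$ such that $|u(x)-g(x)|\le\varepsilon$ for all $x\in[-1,1]$.
   Context: A piecewise linear (PL) function is a continuous function $g:\mathbb{R}\to\mathbb{R}$ which is affine on each of finitely many intervals partitioning $\mathbb{R}$ (separated by finitely many breakpoints). A PL function $g$ is called $\alpha$-power PL if there is a constant $c\in\mathbb{R}$ such that the slope of every linear piece of $g$ lies in $\{c\alpha^k: k\in\mathbb{Z}\}$. *)

From Stdlib Require Import Reals Lra List Sorted.
Open Scope R_scope.

(* The i-th closed piece (i = 0 .. length bs) determined by the increasing
   breakpoint list bs = [b_0; ...; b_{n-1}]:
   piece 0 = (-oo, b_0], piece i = [b_{i-1}, b_i], piece n = [b_{n-1}, +oo). *)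
Definition in_piece (bs : list R) (i : nat) (x : R) : Prop :=
  (i = 0%nat \/ nth (i - 1) bs 0 <= x) /\
  (i = length bs \/ x <= nth i bs 0).

Definition PL_with_slopes (S : R -> Prop) (g : R -> R) : Prop :=
  continuity g /\
  exists bs : list R,
    StronglySorted Rlt bs /\
    forall i : nat, (i <= length bs)%nat ->
      exists a b : R, S a /\ forall x, in_piece bs i x -> g x = a * x + b.

Definition is_PL (g : R -> R) : Prop := PL_with_slopes (fun _ => True) g.

Definition alpha_power_PL (alpha : R) (g : R -> R) : Prop :=
  exists c : R, PL_with_slopes (fun a => exists k : Z, a = c * powerRZ alpha k) g.

Definition monotone_on (u : R -> R) (a b : R) : Prop :=
  (forall x y, a <= x -> x <= y -> y <= b -> u x <= u y) \/
  (forall x y, a <= x -> x <= y -> y <= b -> u y <= u x).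

Definition continuous_on_interval (u : R -> R) (a b : R) : Prop :=
  forall x, a <= x <= b ->
    forall eps, 0 < eps -> exists delta, 0 < delta /\
      forall y, a <= y <= b -> Rabs (y - x) < delta -> Rabs (u y - u x) < eps.

(* On a uniform grid of mesh h, raise the target values [u x_j] by a tilt
   [c (x_j - a)], so that every increment lies strictly between [s1 h] and
   [s2 h] for a tiny slope [s1 = alpha^k] and a huge one [s2 = alpha^-m].
   Each increment is then realised exactly by a two-piece path (slope [s2],
   then slope [s1]), which stays monotone inside its cell; hence the error is
   at most the oscillation of [u] on a cell plus the tilt.  Decreasing [u] is
   reduced to the increasing case by negation. *)

From Stdlib Require Import Reals Lra List Sorted Lia.
Open Scope R_scope.
Import ListNotations.

Definition affine_pieces (P : R -> Prop) (g : R -> R) (bs : list R) : Prop :=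
  forall i : nat, (i <= length bs)%nat ->
    exists a b : R, P a /\ forall x, in_piece bs i x -> g x = a * x + b.

(* [g] up to [t], continued affinely with slope [a] after [t]. *)
Definition glue (g : R -> R) (t a : R) : R -> R :=
  fun x => g (Rmin x t) + a * (Rmax x t - t).

Lemma continuity_pt_1_lipschitz (f : R -> R) x :
  (forall y, Rabs (f y - f x) <= Rabs (y - x)) -> continuity_pt f x.
Proof.
  intros Hf eps Heps; exists eps; split; [lra|].
  intros y [_ Hy]; simpl in *; unfold R_dist in *.
  specialize (Hf y); lra.
Qed.

Lemma Rmin_1_lipschitz t x y : Rabs (Rmin y t - Rmin x t) <= Rabs (y - x).
Proof.
  unfold Rmin; destruct (Rle_dec y t), (Rle_dec x t);
    unfold Rabs; repeat destruct Rcase_abs; lra.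
Qed.

Lemma Rmax_1_lipschitz t x y : Rabs (Rmax y t - Rmax x t) <= Rabs (y - x).
Proof.
  unfold Rmax; destruct (Rle_dec y t), (Rle_dec x t);
    unfold Rabs; repeat destruct Rcase_abs; lra.
Qed.

Lemma continuity_glue g t a : continuity g -> continuity (glue g t a).
Proof.
  intros Hg x; unfold glue.
  apply continuity_pt_plus.
  - apply (continuity_pt_comp (fun y => Rmin y t) g); [|apply Hg].
    apply continuity_pt_1_lipschitz; intros; apply Rmin_1_lipschitz.
  - apply continuity_pt_scal, continuity_pt_minus.
    + apply continuity_pt_1_lipschitz; intros; apply Rmax_1_lipschitz.
    + apply continuity_pt_const; intros ? ?; reflexivity.
Qed.

Lemma StronglySorted_snoc (bs : list R) t :
  StronglySorted Rlt bs -> (forall z, In z bs -> z < t) ->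
  StronglySorted Rlt (bs ++ [t]).
Proof.
  induction bs as [|z bs IH]; intros Hs Hz; simpl.
  - repeat constructor.
  - inversion Hs; subst; constructor.
    + apply IH; auto; intros; apply Hz; simpl; auto.
    + apply Forall_app; split; auto.
      constructor; [apply Hz; simpl; auto | constructor].
Qed.

Lemma affine_pieces_glue P g bs t a :
  (forall z, In z bs -> z < t) -> affine_pieces P g bs -> P a ->
  affine_pieces P (glue g t a) (bs ++ [t]).
Proof.
  intros Hz Hg Ha i Hi; rewrite length_app in Hi; simpl in Hi; unfold glue.
  assert (Hleft : forall x, x <= t -> g (Rmin x t) + a * (Rmax x t - t) = g x).
  { intros x Hx; rewrite Rmin_left, Rmax_right by lra; ring. }
  destruct (Nat.lt_ge_cases i (length bs)) as [Hlt|Hge].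
  - destruct (Hg i ltac:(lia)) as [a0 [b0 [HP Hf]]].
    exists a0, b0; split; auto; intros x [H1 H2].
    rewrite app_nth1 in H2 by auto.
    destruct H2 as [H2|H2]; [rewrite length_app in H2; simpl in H2; lia|].
    assert (nth i bs 0 < t) by (apply Hz, nth_In; auto).
    rewrite Hleft by lra; apply Hf; split; [|right; auto].
    destruct H1 as [H1|H1]; [left; auto | right; rewrite app_nth1 in H1 by lia; auto].
  - destruct (Nat.eq_dec i (length bs)) as [->|Hne].
    + destruct (Hg (length bs) (le_n _)) as [a0 [b0 [HP Hf]]].
      exists a0, b0; split; auto; intros x [H1 H2].
      destruct H2 as [H2|H2]; [rewrite length_app in H2; simpl in H2; lia|].
      rewrite app_nth2, Nat.sub_diag in H2 by lia; simpl in H2.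
      rewrite Hleft by lra; apply Hf; split; [|left; auto].
      destruct H1 as [H1|H1]; [left; auto|].
      destruct (length bs) as [|k] eqn:Hk; [left; auto | right].
      rewrite app_nth1 in H1 by lia; auto.
    + replace i with (S (length bs)) in * by lia.
      exists a, (g t - a * t); split; auto; intros x [[H1|H1] _]; [discriminate|].
      replace (S (length bs) - 1)%nat with (length bs) in H1 by lia.
      rewrite app_nth2, Nat.sub_diag in H1 by lia; simpl in H1.
      rewrite Rmin_right, Rmax_left by lra; ring.
Qed.

Lemma exists_cell (xs : nat -> R) n x :
  xs O <= x <= xs (S n) -> exists j, (j <= n)%nat /\ xs j <= x <= xs (S j).
Proof.
  induction n as [|n IH]; intros Hx.
  - exists O; auto.
  - destruct (Rle_dec x (xs (S n))).
    + destruct IH as [j [Hj Hjx]]; [lra|]; exists j; split; auto.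
    + exists (S n); split; auto; lra.
Qed.

Section TwoSlopePath.

Variables (xs qs : nat -> R) (y0 s1 s2 : R).

(* Starting from the line of slope [s2] through [(xs 0, y0)], cell [j] is
   traversed with slope [s2] up to [qs j] and slope [s1] up to [xs (S j)];
   after [xs (S j)] the path continues with slope [s2]. *)
Fixpoint two_slope_path (j : nat) : R -> R :=
  match j with
  | O => fun x => y0 + s2 * (x - xs O)
  | S j => glue (glue (two_slope_path j) (qs j) s1) (xs (S j)) s2
  end.

Hypothesis qs_in_cell : forall j, xs j < qs j < xs (S j).

Lemma two_slope_path_S j x : two_slope_path (S j) x =
  two_slope_path j (Rmin (Rmin x (xs (S j))) (qs j))
  + s1 * (Rmax (Rmin x (xs (S j))) (qs j) - qs j)
  + s2 * (Rmax x (xs (S j)) - xs (S j)).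
Proof. reflexivity. Qed.

Lemma two_slope_path_right j z : xs j <= z ->
  two_slope_path j z = two_slope_path j (xs j) + s2 * (z - xs j).
Proof.
  destruct j as [|j]; intros Hz; [simpl; ring|].
  rewrite !two_slope_path_S; pose proof (qs_in_cell j).
  rewrite (Rmin_right z (xs (S j))), (Rmin_right (xs (S j)) (xs (S j))),
    (Rmin_right (xs (S j)) (qs j)), (Rmax_left (xs (S j)) (qs j)),
    (Rmax_left z (xs (S j))), (Rmax_left (xs (S j)) (xs (S j))) by lra.
  ring.
Qed.

Lemma two_slope_path_S_left j x : x <= xs j -> two_slope_path (S j) x = two_slope_path j x.
Proof.
  intros Hx; rewrite two_slope_path_S; pose proof (qs_in_cell j).
  rewrite !(Rmin_left x), (Rmax_right x (qs j)), (Rmax_right x) by lra; ring.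
Qed.

Lemma xs_increasing k m : xs m <= xs (k + m).
Proof. induction k; simpl; [lra | pose proof (qs_in_cell (k + m)); lra]. Qed.

Lemma two_slope_path_stable k m x :
  x <= xs m -> two_slope_path (k + m) x = two_slope_path m x.
Proof.
  intros Hx; induction k as [|k IH]; [reflexivity|].
  change (S k + m)%nat with (S (k + m)).
  rewrite two_slope_path_S_left; auto; pose proof (xs_increasing k m); lra.
Qed.

Lemma two_slope_path_on_cell j x : xs j <= x <= xs (S j) ->
  two_slope_path (S j) x = two_slope_path j (xs j)
    + s2 * (Rmin x (qs j) - xs j) + s1 * (Rmax x (qs j) - qs j).
Proof.
  intros Hx; pose proof (qs_in_cell j).
  rewrite two_slope_path_S, (Rmin_left x (xs (S j))), (Rmax_right x (xs (S j))) by lra.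
  rewrite (two_slope_path_right j (Rmin x (qs j))); [ring|].
  unfold Rmin; destruct Rle_dec; lra.
Qed.

Lemma two_slope_path_PL (P : R -> Prop) : P s1 -> P s2 -> forall j,
  continuity (two_slope_path j) /\ exists bs, StronglySorted Rlt bs /\
    (forall z, In z bs -> z < qs j) /\ affine_pieces P (two_slope_path j) bs.
Proof.
  intros P1 P2 j; induction j as [|j [Hc [bs [Hs [Hz Hp]]]]].
  - split.
    + intro x; simpl; apply continuity_pt_plus; [apply continuity_pt_const; intros ? ?; auto|].
      apply continuity_pt_scal, continuity_pt_minus.
      * apply derivable_continuous_pt, derivable_pt_id.
      * apply continuity_pt_const; intros ? ?; auto.
    + exists []; repeat split; [constructor | simpl; tauto |].
      intros i _; exists s2, (y0 - s2 * xs O); split; auto; intros x _; simpl; ring.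
  - split; [apply continuity_glue, continuity_glue, Hc|].
    pose proof (qs_in_cell j); pose proof (qs_in_cell (S j)).
    assert (Hz' : forall z, In z (bs ++ [qs j]) -> z < xs (S j)).
    { intros z [Hin|[<-|[]]]%in_app_or; [apply Hz in Hin|]; lra. }
    exists ((bs ++ [qs j]) ++ [xs (S j)]); split; [|split].
    + apply StronglySorted_snoc, Hz'; apply StronglySorted_snoc; auto.
    + intros z [Hin|[<-|[]]]%in_app_or; [apply Hz' in Hin|]; lra.
    + apply affine_pieces_glue; auto; apply affine_pieces_glue; auto.
Qed.

End TwoSlopePath.

Lemma two_slope_interpolation (P : R -> Prop) (s1 s2 : R) (xs ys : nat -> R) (n : nat) :
  P s1 -> P s2 -> 0 <= s1 ->
  (forall j, xs j < xs (S j)) ->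
  (forall j, s1 * (xs (S j) - xs j) < ys (S j) - ys j < s2 * (xs (S j) - xs j)) ->
  exists g, PL_with_slopes P g /\
    forall j x, (j <= n)%nat -> xs j <= x <= xs (S j) -> ys j <= g x <= ys (S j).
Proof.
  intros P1 P2 Hs1 Hxs Hys.
  assert (Hs12 : s1 < s2) by (pose proof (Hxs O); pose proof (Hys O); nra).
  (* [qs j - xs j] is the time spent at slope [s2] that makes the cell's
     increment come out exactly. *)
  set (qs := fun j => xs j + (ys (S j) - ys j - s1 * (xs (S j) - xs j)) / (s2 - s1)).
  assert (Hq : forall j, (qs j - xs j) * (s2 - s1) = ys (S j) - ys j - s1 * (xs (S j) - xs j)).
  { intro j; unfold qs; field; lra. }
  assert (Hcell : forall j, xs j < qs j < xs (S j)).
  { intro j; pose proof (Hq j); pose proof (Hys j); pose proof (Hxs j); split; nra. }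
  assert (Hnodes : forall j, two_slope_path xs qs (ys O) s1 s2 j (xs j) = ys j).
  { induction j as [|j IH]; [simpl; ring|].
    pose proof (Hcell j); pose proof (Hq j).
    rewrite two_slope_path_on_cell, IH, Rmin_right, Rmax_left by (auto; lra); nra. }
  destruct (two_slope_path_PL xs qs (ys O) s1 s2 Hcell P P1 P2 (S n))
    as [Hc [bs [Hs [_ Hp]]]].
  exists (two_slope_path xs qs (ys O) s1 s2 (S n)); split; [split; [exact Hc | exists bs; auto]|].
  intros j x Hj Hx; pose proof (Hcell j); pose proof (Hq j).
  replace (S n) with ((n - j) + S j)%nat by lia.
  rewrite two_slope_path_stable, two_slope_path_on_cell by (auto; lra).
  rewrite Hnodes.
  unfold Rmin, Rmax; destruct Rle_dec; nra.
Qed.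

Definition clamp (a b x : R) : R := Rmax a (Rmin x b).

Lemma clamp_in a b x : a <= b -> a <= clamp a b x <= b.
Proof. intros; unfold clamp, Rmax, Rmin; repeat destruct Rle_dec; lra. Qed.

Lemma clamp_id a b x : a <= x <= b -> clamp a b x = x.
Proof. intros; unfold clamp, Rmax, Rmin; repeat destruct Rle_dec; lra. Qed.

Lemma clamp_le a b x y : x <= y -> clamp a b x <= clamp a b y.
Proof. intros; unfold clamp, Rmax, Rmin; repeat destruct Rle_dec; lra. Qed.

Lemma clamp_1_lipschitz a b x y : Rabs (clamp a b y - clamp a b x) <= Rabs (y - x).
Proof.
  unfold clamp, Rmax, Rmin; repeat destruct Rle_dec;
    unfold Rabs; repeat destruct Rcase_abs; lra.
Qed.

Lemma nondecreasing_clamp (v : R -> R) a b : a <= b ->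
  (forall x y, a <= x -> x <= y -> y <= b -> v x <= v y) ->
  forall x y, x <= y -> v (clamp a b x) <= v (clamp a b y).
Proof.
  intros Hab Hv x y Hxy; pose proof (clamp_in a b x Hab); pose proof (clamp_in a b y Hab).
  pose proof (clamp_le a b x y Hxy); apply Hv; lra.
Qed.

Lemma uniform_continuity_clamp (v : R -> R) a b :
  a <= b -> continuous_on_interval v a b -> forall e, 0 < e ->
  exists d, 0 < d /\ forall x y,
    Rabs (y - x) < d -> Rabs (v (clamp a b y) - v (clamp a b x)) < e.
Proof.
  intros Hab Hv e He.
  set (w := fun x => v (clamp a b x)).
  assert (Hw : forall x, continuity_pt w x).
  { intros x e' He'.
    destruct (Hv (clamp a b x) (clamp_in a b x Hab) e' He') as [d [Hd Hclose]].
    exists d; split; [lra|]; intros y [_ Hy]; simpl in *; unfold R_dist in *.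
    apply Hclose; [apply clamp_in; auto|].
    pose proof (clamp_1_lipschitz a b x y); lra. }
  destruct (Heine w (fun c => a <= c <= b) (compact_P3 a b) (fun x _ => Hw x)
              (mkposreal e He)) as [[d Hd] Hunif]; simpl in Hunif.
  exists d; split; auto; intros x y Hxy.
  rewrite <- (clamp_id a b (clamp a b y)), <- (clamp_id a b (clamp a b x))
    by (apply clamp_in; auto).
  apply Hunif; try (apply clamp_in; auto).
  pose proof (clamp_1_lipschitz a b x y); lra.
Qed.

Lemma powerRZ_arbitrarily_small alpha c :
  0 < alpha < 1 -> 0 < c -> exists k : Z, powerRZ alpha k < c.
Proof.
  intros Halpha Hc.
  destruct (pow_lt_1_zero alpha ltac:(rewrite Rabs_pos_eq; lra) c Hc) as [K HK].
  specialize (HK K (le_n _)); rewrite Rabs_pos_eq in HK by (apply pow_le; lra).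
  exists (Z.of_nat K); rewrite <- pow_powerRZ; exact HK.
Qed.

Lemma powerRZ_arbitrarily_large alpha B :
  0 < alpha < 1 -> exists k : Z, B < powerRZ alpha k.
Proof.
  intros Halpha.
  destruct (powerRZ_arbitrarily_small alpha (/ (Rabs B + 1)) Halpha)
    as [k Hk]; [apply Rinv_0_lt_compat; pose proof (Rabs_pos B); lra|].
  exists (- k)%Z; rewrite powerRZ_neg'.
  pose proof (powerRZ_lt alpha k ltac:(lra)).
  apply Rinv_lt_contravar in Hk; [|apply Rmult_lt_0_compat; auto;
    apply Rinv_0_lt_compat; pose proof (Rabs_pos B); lra].
  rewrite Rinv_inv in Hk; pose proof (Rle_abs B); lra.
Qed.

Lemma exists_fine_uniform_mesh a b d : a < b -> 0 < d ->
  exists n : nat, 0 < (b - a) / INR (S n) < d.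
Proof.
  intros Hab Hd.
  destruct (archimed_cor1 (d / (b - a))) as [N [HN HN0]]; [apply Rdiv_lt_0_compat; lra|].
  assert (HNpos : 0 < INR N) by (apply lt_0_INR; lia).
  exists (pred N); rewrite Nat.succ_pred_pos by lia; unfold Rdiv; split.
  - apply Rmult_lt_0_compat; [lra | apply Rinv_0_lt_compat; lra].
  - apply (Rmult_lt_compat_l (b - a)) in HN; [|lra].
    replace ((b - a) * (d / (b - a))) with d in HN by (field; lra); lra.
Qed.

Lemma alpha_power_PL_approx_nondecreasing (alpha a b : R) (v : R -> R) :
  0 < alpha < 1 -> a < b -> continuous_on_interval v a b ->
  (forall x y, a <= x -> x <= y -> y <= b -> v x <= v y) ->
  forall eps, 0 < eps -> exists g, alpha_power_PL alpha g /\
    forall x, a <= x <= b -> Rabs (v x - g x) <= eps.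
Proof.
  intros Halpha Hab Hv Hmono eps Heps.
  set (w := fun x => v (clamp a b x)).
  assert (Hw_mono : forall x y, x <= y -> w x <= w y)
    by exact (nondecreasing_clamp v a b ltac:(lra) Hmono).
  destruct (uniform_continuity_clamp v a b ltac:(lra) Hv (eps / 2) ltac:(lra))
    as [d [Hd Hw_unif]].
  destruct (exists_fine_uniform_mesh a b d Hab Hd) as [n Hh].
  set (h := (b - a) / INR (S n)) in Hh.
  set (c := eps / (2 * (b - a))).
  assert (Hc : 0 < c) by (unfold c; apply Rdiv_lt_0_compat; lra).
  assert (Htilt : c * (b - a) = eps / 2) by (unfold c; field; lra).
  destruct (powerRZ_arbitrarily_small alpha c Halpha Hc) as [k1 Hk1].
  destruct (powerRZ_arbitrarily_large alpha (c + eps / (2 * h)) Halpha) as [k2 Hk2].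
  set (xs := fun j => a + INR j * h).
  set (ys := fun j => w (xs j) + c * (xs j - a)).
  assert (Hxs : forall j, xs (S j) - xs j = h) by (intro j; unfold xs; rewrite S_INR; ring).
  assert (Hstep : forall j, 0 <= w (xs (S j)) - w (xs j) < eps / 2).
  { intro j; pose proof (Hxs j).
    pose proof (Hw_mono (xs j) (xs (S j)) ltac:(lra)).
    pose proof (Hw_unif (xs j) (xs (S j)) ltac:(rewrite Rabs_pos_eq; lra)) as Hosc.
    apply Rabs_def2 in Hosc; unfold w in *; lra. }
  destruct (two_slope_interpolation (fun s => exists k : Z, s = 1 * powerRZ alpha k)
              (powerRZ alpha k1) (powerRZ alpha k2) xs ys n)
    as [g [Hg Hbounds]].
  - exists k1; ring.
  - exists k2; ring.
  - left; apply powerRZ_lt; lra.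
  - intro j; pose proof (Hxs j); lra.
  - intro j; rewrite Hxs.
    replace (ys (S j) - ys j) with (w (xs (S j)) - w (xs j) + c * h)
      by (unfold ys; rewrite <- (Hxs j); ring).
    assert (powerRZ alpha k1 * h < c * h) by (apply Rmult_lt_compat_r; lra).
    assert ((c + eps / (2 * h)) * h < powerRZ alpha k2 * h)
      by (apply Rmult_lt_compat_r; lra).
    assert ((c + eps / (2 * h)) * h = c * h + eps / 2) by (field; lra).
    pose proof (Hstep j); lra.
  - exists g; split; [exists 1; exact Hg|].
    intros x Hx.
    assert (Hx0 : xs O = a) by (unfold xs; simpl; ring).
    assert (HxN : xs (S n) = b) by (unfold xs, h; field; apply not_0_INR; lia).
    destruct (exists_cell xs n x) as [j [Hj Hjx]]; [lra|].
    specialize (Hbounds j x Hj Hjx); unfold ys in Hbounds.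
    assert (Hj_in : a <= xs j /\ xs (S j) <= b).
    { unfold xs in *; pose proof (pos_INR j); pose proof (le_INR (S j) (S n) ltac:(lia)).
      split; nra. }
    assert (Hvw : v x = w x) by (unfold w; rewrite clamp_id; auto).
    pose proof (Hw_mono (xs j) x ltac:(lra)); pose proof (Hw_mono x (xs (S j)) ltac:(lra)).
    pose proof (Hstep j).
    assert (0 <= c * (xs j - a)) by (apply Rmult_le_pos; lra).
    assert (c * (xs (S j) - a) <= c * (b - a)) by (apply Rmult_le_compat_l; lra).
    rewrite Hvw; apply Rabs_le; split; lra.
Qed.

Lemma continuous_on_interval_opp (u : R -> R) a b :
  continuous_on_interval u a b -> continuous_on_interval (fun x => - u x) a b.
Proof.
  intros Hu x Hx e He; destruct (Hu x Hx e He) as [d [Hd Hclose]].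
  exists d; split; auto; intros y Hy Hyx.
  replace (- u y - - u x) with (- (u y - u x)) by ring; rewrite Rabs_Ropp; auto.
Qed.

Lemma alpha_power_PL_opp alpha (g : R -> R) :
  alpha_power_PL alpha g -> alpha_power_PL alpha (fun x => - g x).
Proof.
  intros [c [Hc [bs [Hs Hp]]]].
  exists (- c); split; [apply (continuity_opp g Hc)|].
  exists bs; split; auto; intros i Hi.
  destruct (Hp i Hi) as [a [b [[k Hk] Hf]]].
  exists (- a), (- b); split; [exists k; rewrite Hk; ring|].
  intros x Hx; rewrite Hf by auto; ring.
Qed.

Theorem mainTheorem5 (alpha : R) (Halpha : 0 < alpha < 1) (u : R -> R)
  (Hcont : continuous_on_interval u (-1) 1)
  (Hmono : monotone_on u (-1) 1) :
  forall eps : R, 0 < eps ->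
    exists g : R -> R, alpha_power_PL alpha g /\
      forall x : R, -1 <= x <= 1 -> Rabs (u x - g x) <= eps.
Proof.
  intros eps Heps; destruct Hmono as [Hinc|Hdec].
  - exact (alpha_power_PL_approx_nondecreasing alpha (-1) 1 u
             Halpha ltac:(lra) Hcont Hinc eps Heps).
  - destruct (alpha_power_PL_approx_nondecreasing alpha (-1) 1 (fun x => - u x)
                Halpha ltac:(lra) (continuous_on_interval_opp u _ _ Hcont)
                ltac:(intros x y Hx Hxy Hy; specialize (Hdec x y Hx Hxy Hy); lra)
                eps Heps) as [g [Hg Hclose]].
    exists (fun x => - g x); split; [apply alpha_power_PL_opp, Hg|].
    intros x Hx; specialize (Hclose x Hx).
    replace (u x - - g x) with (- (- u x - g x)) by ring; rewrite Rabs_Ropp; exact Hclose.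
Qed.
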